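(* Let $B$ be the open unit ball of $\mathbb{C}^n$ for a norm $\|\cdot\|$ and let $f:\Delta\to\mathbb{C}^n$ be a holomorphic map with $f(\Delta)\subset\overline B$. Then $\|f(0)+\zeta(f(z)-f(0))\|\le 1$ for every $z\in\Delta\setminus\{0\}$ and every $\zeta\in\mathbb{C}$ with $|\zeta|\le\frac{1-|z|}{2|z|}$.
   Context: $\Delta$ is the open unit disc of $\mathbb{C}$. *)

From Stdlib Require Import Reals.
From Stdlib Require Fin.
From Coquelicot Require Export Coquelicot.
Open Scope R_scope.

Definition Cn (n : nat) := Fin.t n -> C.

Definition vadd {n} (x y : Cn n) : Cn n := fun i => Cplus (x i) (y i).
Definition vscal {n} (c : C) (x : Cn n) : Cn n := fun i => Cmult c (x i).
Definition vsub {n} (x y : Cn n) : Cn n := fun i => Cminus (x i) (y i).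

Definition is_norm {n} (N : Cn n -> R) : Prop :=
  (forall x, 0 <= N x) /\
  (forall x, N x = 0 -> forall i, x i = 0%C) /\
  (forall (c : C) x, N (vscal c x) = Cmod c * N x) /\
  (forall x y, N (vadd x y) <= N x + N y).

Definition in_disc (z : C) : Prop := Cmod z < 1.

Definition holomorphic_on_disc {n} (f : C -> Cn n) : Prop :=
  forall (i : Fin.t n) (z : C), in_disc z ->
    ex_derive (K := C_AbsRing) (V := C_NormedModule) (fun w => f w i) z.

(* Write w = r e^{iy} with |z| < r < 1.  The kernel
     P(y) = 1 + 2 Re (zeta z / (w - z))
   is real, and nonnegative as soon as |zeta| |z| <= (r - |z|) / 2.  On the circle
   the conjugate of zeta z / (w - z) is again a rational function of w that is
   holomorphic in the closed disc, so Cauchy's integral formula gives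
     (1 / 2 pi) int f(w) P(y) dy = f(0) + zeta (f(z) - f(0)),  (1 / 2 pi) int P(y) dy = 1.
   Hence f(0) + zeta (f(z) - f(0)) is an average of points of the closed unit
   ball, and so lies in it; letting r tend to 1 recovers the full range of zeta.
   Cauchy's formula is obtained from Goursat's lemma for the rectangle
   [0, 1] x [0, 2 pi] mapped onto the region between the circles |w - c| = t and
   |w| = r, followed by t -> 0. *)

From Stdlib Require Import Reals Lra Psatz ClassicalEpsilon FunctionalExtensionality.
From Stdlib Require Fin.
From Coquelicot Require Import Coquelicot.
Open Scope R_scope.

(** * Complex numbers and the unit circle *)

Lemma Cmod_Im_le (c : C) : Rabs (Im c) <= Cmod c.
Proof. eapply Rle_trans; [apply Rmax_r | apply Rmax_Cmod]. Qed.

Lemma Cmod_le_Re_plus_Im (c : C) : Cmod c <= Rabs (Re c) + Rabs (Im c).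
Proof.
  destruct c as [a b]. unfold Cmod, Re, Im; simpl.
  pose proof (Rabs_pos a); pose proof (Rabs_pos b).
  apply Rsqr_incr_0_var; [|lra]. rewrite Rsqr_sqrt by nra. unfold Rsqr.
  assert (Rabs a * Rabs a = a * a) by (rewrite <- Rabs_mult; apply Rabs_right; nra).
  assert (Rabs b * Rabs b = b * b) by (rewrite <- Rabs_mult; apply Rabs_right; nra).
  nra.
Qed.

Lemma Cmod_sub_ge (a b : C) : Cmod a - Cmod b <= Cmod (a - b).
Proof.
  pose proof (Cmod_triangle (a - b) b). replace (a - b + b)%C with a in H by ring. lra.
Qed.

Lemma Cmod_sub_comm (a b : C) : Cmod (a - b) = Cmod (b - a).
Proof. rewrite <- Cmod_opp. f_equal. ring. Qed.

Lemma Cmod_RtoC_mult (r : R) (c : C) : Cmod (RtoC r * c) = Rabs r * Cmod c.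
Proof. rewrite Cmod_mult, Cmod_R. reflexivity. Qed.

Lemma Rabs_sub_le_of_derive_bound (f f' : R -> R) (a b : R) :
  (forall t, derivable_pt_lim f t (f' t)) -> (forall t, Rabs (f' t) <= 1) ->
  Rabs (f b - f a) <= Rabs (b - a).
Proof.
  intros Hf Hf'. destruct (MVT_abs f f' a b) as [t [-> _]]; [intros; apply Hf|].
  pose proof (Hf' t). pose proof (Rabs_pos (b - a)). nra.
Qed.

Definition cis (y : R) : C := (cos y, sin y).

Lemma Cmod_cis (y : R) : Cmod (cis y) = 1.
Proof.
  unfold Cmod, cis; simpl. pose proof (sin2_cos2 y). unfold Rsqr in H.
  replace (_ + _) with 1 by nra. apply sqrt_1.
Qed.

Lemma cis_neq_0 (y : R) : cis y <> 0%C.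
Proof. intros E. pose proof (Cmod_cis y). rewrite E, Cmod_0 in H. lra. Qed.

Lemma cis_2PI : cis (2 * PI) = cis 0.
Proof. unfold cis. rewrite cos_2PI, sin_2PI, cos_0, sin_0. reflexivity. Qed.

Lemma Cconj_cis (y : R) : Cconj (cis y) = (/ cis y)%C.
Proof.
  pose proof (cis_neq_0 y).
  transitivity ((Cconj (cis y) * cis y) * / cis y)%C; [field; auto|].
  replace (Cconj (cis y) * cis y)%C with (RtoC 1); [ring|].
  pose proof (sin2_cos2 y). unfold Rsqr in H0.
  unfold cis, Cconj; apply injective_projections; simpl; lra.
Qed.

Lemma Cmod_cis_sub_le (a b : R) : Cmod (cis b - cis a) <= 2 * Rabs (b - a).
Proof.
  eapply Rle_trans; [apply Cmod_le_Re_plus_Im|]. unfold cis, Re, Im; simpl.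
  pose proof (Rabs_sub_le_of_derive_bound cos (fun t => - sin t) a b derivable_pt_lim_cos
    (fun t => ltac:(cbv beta; rewrite Rabs_Ropp; apply Rabs_le, SIN_bound))).
  pose proof (Rabs_sub_le_of_derive_bound sin cos a b derivable_pt_lim_sin
    (fun t => ltac:(apply Rabs_le, COS_bound))).
  unfold Rminus in *. lra.
Qed.

(** * Bisection *)

Lemma nested_intervals (a b : nat -> R) :
  (forall k, a k <= a (S k)) -> (forall k, b (S k) <= b k) -> (forall k, a k <= b k) ->
  exists x, forall k, a k <= x <= b k.
Proof.
  intros Ha Hb Hab.
  assert (Ma : forall j k, (j <= k)%nat -> a j <= a k).
  { intros j k H; induction H; [lra | specialize (Ha m); lra]. }
  assert (Mb : forall j k, (j <= k)%nat -> b k <= b j).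
  { intros j k H; induction H; [lra | specialize (Hb m); lra]. }
  assert (Hjk : forall j k, a j <= b k).
  { intros j k. destruct (Nat.le_ge_cases j k) as [H | H].
    - specialize (Ma _ _ H); specialize (Hab k); lra.
    - specialize (Mb _ _ H); specialize (Hab j); lra. }
  destruct (completeness (fun x => exists k, x = a k)) as [x [Hub Hlub]].
  - exists (b 0%nat). intros y [k ->]. apply Hjk.
  - exists (a 0%nat); eauto.
  - exists x. intros k; split.
    + apply Hub; eauto.
    + apply Hlub. intros y [j ->]. apply Hjk.
Qed.

Lemma pow2_div_lt (M del : R) : 0 < del -> exists k : nat, M / 2 ^ k < del.
Proof.
  intros Hdel.
  assert (H2 : forall k, INR k + 1 <= 2 ^ k).
  { induction k; [simpl; lra|]. rewrite S_INR. simpl pow. pose proof (pos_INR k). lra. }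
  destruct (INR_archimed del M Hdel) as [k Hk].
  exists k. specialize (H2 k). assert (0 < 2 ^ k) by (apply pow_lt; lra).
  apply (Rmult_lt_reg_r (2 ^ k)); auto. unfold Rdiv. rewrite Rmult_assoc, Rinv_l by lra. nra.
Qed.

Record rect := Rect { rx0 : R; rx1 : R; ry0 : R; ry1 : R }.

Definition is_quarter (r r' : rect) : Prop :=
  let mx := (rx0 r + rx1 r) / 2 in let my := (ry0 r + ry1 r) / 2 in
  (rx0 r' = rx0 r /\ rx1 r' = mx \/ rx0 r' = mx /\ rx1 r' = rx1 r) /\
  (ry0 r' = ry0 r /\ ry1 r' = my \/ ry0 r' = my /\ ry1 r' = ry1 r).

Lemma is_quarter_sides (r r' : rect) : is_quarter r r' ->
  rx0 r <= rx1 r -> ry0 r <= ry1 r ->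
  rx0 r <= rx0 r' /\ rx1 r' <= rx1 r /\ rx1 r' - rx0 r' = (rx1 r - rx0 r) / 2 /\
  ry0 r <= ry0 r' /\ ry1 r' <= ry1 r /\ ry1 r' - ry0 r' = (ry1 r - ry0 r) / 2.
Proof. intros [[[-> ->] | [-> ->]] [[-> ->] | [-> ->]]]; lra. Qed.

Lemma quarter_iterates (s : nat -> rect) (a0 b0 c0 d0 : R) :
  a0 < b0 -> c0 < d0 -> s 0%nat = Rect a0 b0 c0 d0 -> (forall k, is_quarter (s k) (s (S k))) ->
  forall k,
  (rx1 (s k) - rx0 (s k) = (b0 - a0) / 2 ^ k /\ ry1 (s k) - ry0 (s k) = (d0 - c0) / 2 ^ k) /\
  (a0 <= rx0 (s k) /\ rx1 (s k) <= b0 /\ c0 <= ry0 (s k) /\ ry1 (s k) <= d0) /\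
  (rx0 (s k) <= rx0 (s (S k)) /\ rx1 (s (S k)) <= rx1 (s k) /\
   ry0 (s k) <= ry0 (s (S k)) /\ ry1 (s (S k)) <= ry1 (s k)).
Proof.
  intros Hab0 Hcd0 Hs0 Hq.
  assert (Hpow : forall k, 0 < 2 ^ k) by (intros; apply pow_lt; lra).
  assert (Hhalf : forall M k, M / 2 ^ S k = M / 2 ^ k / 2)
    by (intros; simpl pow; field; apply pow_nonzero; lra).
  assert (Hpos : forall M k, 0 < M -> 0 <= M / 2 ^ k)
    by (intros; left; apply Rdiv_lt_0_compat; auto).
  assert (HW : 0 < b0 - a0) by lra. assert (HH : 0 < d0 - c0) by lra.
  induction k as [| k [[Ex Ey] Hin]].
  - pose proof (is_quarter_sides _ _ (Hq 0%nat)) as Q. rewrite Hs0 in Q |- *. simpl in *.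
    rewrite !Rdiv_1. destruct Q as (Q1 & Q2 & _ & Q4 & Q5 & _); lra.
  - pose proof (Hpos _ k HW). pose proof (Hpos _ k HH).
    destruct (is_quarter_sides _ _ (Hq k)) as (Q1 & Q2 & Q3 & Q4 & Q5 & Q6); try lra.
    pose proof (Hpos _ (S k) HW). pose proof (Hpos _ (S k) HH).
    rewrite !Hhalf in *.
    destruct (is_quarter_sides _ _ (Hq (S k))) as (R1 & R2 & _ & R4 & R5 & _); lra.
Qed.

(* Goursat's bisection argument in abstract form.  Locality is only required on
   rectangles similar to the initial one: this keeps their area comparable to
   the square of their perimeter. *)
Lemma quadrisection_principle (P : R -> R -> R -> R -> Prop) (a0 b0 c0 d0 : R) :
  a0 < b0 -> c0 < d0 ->
  (forall a b c d, a0 <= a -> a <= b -> b <= b0 -> c0 <= c -> c <= d -> d <= d0 ->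
     P a ((a + b) / 2) c ((c + d) / 2) -> P ((a + b) / 2) b c ((c + d) / 2) ->
     P a ((a + b) / 2) ((c + d) / 2) d -> P ((a + b) / 2) b ((c + d) / 2) d ->
     P a b c d) ->
  (forall x y, a0 <= x <= b0 -> c0 <= y <= d0 -> exists del, 0 < del /\
     forall a b c d, a0 <= a -> b <= b0 -> c0 <= c -> d <= d0 ->
       a <= x <= b -> c <= y <= d -> b - a < del -> d - c < del ->
       (b - a) * (d0 - c0) = (d - c) * (b0 - a0) -> P a b c d) ->
  P a0 b0 c0 d0.
Proof.
  intros Hab0 Hcd0 Hclosed Hlocal.
  set (Pr := fun r => P (rx0 r) (rx1 r) (ry0 r) (ry1 r)).
  set (inside := fun r => a0 <= rx0 r /\ rx0 r <= rx1 r /\ rx1 r <= b0 /\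
                          c0 <= ry0 r /\ ry0 r <= ry1 r /\ ry1 r <= d0).
  assert (Hstep : forall r, exists r', is_quarter r r' /\ (inside r -> ~ Pr r -> ~ Pr r')).
  { intros [a b c d]. set (m := (a + b) / 2); set (m' := (c + d) / 2).
    destruct (classic (P a m c m')) as [H1 | H1]; [| exists (Rect a m c m'); cbv; tauto].
    destruct (classic (P m b c m')) as [H2 | H2]; [| exists (Rect m b c m'); cbv; tauto].
    destruct (classic (P a m m' d)) as [H3 | H3]; [| exists (Rect a m m' d); cbv; tauto].
    exists (Rect m b m' d). split; [cbv; tauto|].
    intros Hin HnP H4. apply HnP, Hclosed; unfold inside in Hin; simpl in *; tauto. }
  set (next := fun r => proj1_sig (constructive_indefinite_description _ (Hstep r))).
  assert (Hnext : forall r, is_quarter r (next r) /\ (inside r -> ~ Pr r -> ~ Pr (next r)))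
    by (intros r; exact (proj2_sig (constructive_indefinite_description _ (Hstep r)))).
  destruct (classic (P a0 b0 c0 d0)) as [| HnP0]; [assumption | exfalso].
  set (s := fun k => Nat.iter k next (Rect a0 b0 c0 d0)).
  pose proof (quarter_iterates s a0 b0 c0 d0 Hab0 Hcd0 eq_refl (fun k => proj1 (Hnext (s k)))) as Hs.
  assert (Hw : forall k, rx0 (s k) <= rx1 (s k) /\ ry0 (s k) <= ry1 (s k)).
  { intros k. destruct (Hs k) as [[Ex Ey] _].
    assert (0 <= (b0 - a0) / 2 ^ k /\ 0 <= (d0 - c0) / 2 ^ k) as [].
    { split; left; apply Rdiv_lt_0_compat; try lra; apply pow_lt; lra. }
    lra. }
  assert (HnP : forall k, ~ Pr (s k)).
  { induction k as [| k IH]; [exact HnP0|]. apply (Hnext (s k)); [| exact IH].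
    destruct (Hs k) as [_ [Hin _]]. pose proof (Hw k). unfold inside. repeat split; lra. }
  destruct (nested_intervals (fun k => rx0 (s k)) (fun k => rx1 (s k))) as [x Hx];
    try (intros k; first [apply (Hw k) | destruct (Hs k) as (_ & _ & ?); lra]).
  destruct (nested_intervals (fun k => ry0 (s k)) (fun k => ry1 (s k))) as [y Hy];
    try (intros k; first [apply (Hw k) | destruct (Hs k) as (_ & _ & ?); lra]).
  destruct (Hlocal x y) as [del [Hdel Hloc]].
  { specialize (Hx 0%nat); simpl in Hx; lra. }
  { specialize (Hy 0%nat); simpl in Hy; lra. }
  destruct (pow2_div_lt (Rmax (b0 - a0) (d0 - c0)) del Hdel) as [k Hk].
  destruct (Hs k) as [[Ex Ey] [(H1 & H2 & H3 & H4) _]].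
  assert (Hdiv : forall M, M <= Rmax (b0 - a0) (d0 - c0) -> M / 2 ^ k < del).
  { intros M HM. eapply Rle_lt_trans; [| exact Hk].
    apply Rmult_le_compat_r; [left; apply Rinv_0_lt_compat, pow_lt; lra | exact HM]. }
  apply (HnP k), Hloc; try apply Hx; try apply Hy; try assumption.
  - rewrite Ex. apply Hdiv, Rmax_l.
  - rewrite Ey. apply Hdiv, Rmax_r.
  - rewrite Ex, Ey. field. apply pow_nonzero; lra.
Qed.

Lemma interval_bisection (Q : R -> R -> Prop) (a0 b0 : R) : a0 < b0 ->
  (forall a b, a0 <= a -> a <= b -> b <= b0 -> Q a ((a + b) / 2) -> Q ((a + b) / 2) b -> Q a b) ->
  (forall x, a0 <= x <= b0 -> exists del, 0 < del /\
     forall a b, a0 <= a -> b <= b0 -> a <= x <= b -> b - a < del -> Q a b) ->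
  Q a0 b0.
Proof.
  intros Hab0 Hclosed Hlocal.
  apply (quadrisection_principle (fun a b _ _ => Q a b) a0 b0 0 1 Hab0 Rlt_0_1).
  - intros a b c d Ha Hab Hb _ _ _ H1 H2 _ _. auto.
  - intros x y Hx _. destruct (Hlocal x Hx) as [del [Hdel H]].
    exists del. split; [exact Hdel|]. intros a b c d Ha Hb _ _ Hxab _ Hba _ _. auto.
Qed.

(** * Complex differentiability *)

Notation C_ex_derive := (ex_derive (K := C_AbsRing) (V := C_NormedModule)).

(* Coquelicot's generic product and chain rules are stated for [K] viewed as a
   normed module over itself, a structure on [C] that Rocq does not identify with
   [C_NormedModule]. *)
Lemma is_derive_C_NormedModule (g : C -> C) (p D : C) :
  is_derive (K := C_AbsRing) (V := AbsRing_NormedModule C_AbsRing) g p D <->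
  is_derive (K := C_AbsRing) (V := C_NormedModule) g p D.
Proof.
  split; intros [_ Hd]; split;
    [apply is_linear_scal_l | exact Hd | apply is_linear_scal_l | exact Hd].
Qed.

Lemma C_ex_derive_const (k p : C) : C_ex_derive (fun _ => k) p.
Proof. apply ex_derive_const. Qed.

Lemma C_ex_derive_id (p : C) : C_ex_derive (fun w => w) p.
Proof. exists (RtoC 1). apply is_derive_C_NormedModule, (is_derive_id (K := C_AbsRing)). Qed.

Lemma C_ex_derive_plus (g h : C -> C) (p : C) :
  C_ex_derive g p -> C_ex_derive h p -> C_ex_derive (fun w => g w + h w)%C p.
Proof. intros [Dg Hg] [Dh Hh]. exists (Dg + Dh)%C. exact (is_derive_plus g h p Dg Dh Hg Hh). Qed.

Lemma C_ex_derive_minus (g h : C -> C) (p : C) :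
  C_ex_derive g p -> C_ex_derive h p -> C_ex_derive (fun w => g w - h w)%C p.
Proof. intros [Dg Hg] [Dh Hh]. exists (Dg - Dh)%C. exact (is_derive_minus g h p Dg Dh Hg Hh). Qed.

Lemma C_ex_derive_mult (g h : C -> C) (p : C) :
  C_ex_derive g p -> C_ex_derive h p -> C_ex_derive (fun w => g w * h w)%C p.
Proof.
  intros [Dg Hg] [Dh Hh]. eexists. apply is_derive_C_NormedModule.
  apply (is_derive_mult (K := C_AbsRing));
    [apply is_derive_C_NormedModule, Hg | apply is_derive_C_NormedModule, Hh | apply Cmult_comm].
Qed.

Lemma C_ex_derive_linear_approx (g : C -> C) (p : C) : C_ex_derive g p ->
  exists D : C, forall eps, 0 < eps -> exists del, 0 < del /\
    forall w, Cmod (w - p) < del -> Cmod (g w - g p - D * (w - p)) <= eps * Cmod (w - p).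
Proof.
  intros [D [_ HD]]. exists D. intros eps Heps.
  destruct (HD p (fun P H => H) (mkposreal eps Heps)) as [del Hdel].
  exists del. split; [apply cond_pos|]. intros w Hw.
  rewrite Cmult_comm. exact (Hdel w Hw).
Qed.

Lemma C_ex_derive_of_linear_approx (g : C -> C) (p D : C) :
  (forall eps, 0 < eps -> exists del, 0 < del /\
    forall w, Cmod (w - p) < del -> Cmod (g w - g p - D * (w - p)) <= eps * Cmod (w - p)) ->
  C_ex_derive g p.
Proof.
  intros H. exists D. split; [apply is_linear_scal_l|].
  intros x Hx.
  apply (is_filter_lim_locally_unique (K := C_AbsRing) (V := AbsRing_NormedModule C_AbsRing)) in Hx.
  subst x. intros eps. destruct (H eps (cond_pos eps)) as [del [Hdel Hw]].
  exists (mkposreal del Hdel). intros w Hb.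
  change (Cmod (g w - g p - (w - p) * D) <= eps * Cmod (w - p)).
  rewrite (Cmult_comm (w - p)). exact (Hw w Hb).
Qed.

Lemma C_ex_derive_continuous (g : C -> C) (p : C) : C_ex_derive g p ->
  forall eps, 0 < eps -> exists del, 0 < del /\
    forall w, Cmod (w - p) < del -> Cmod (g w - g p) <= eps.
Proof.
  intros Hg eps Heps. destruct (C_ex_derive_linear_approx g p Hg) as [D HD].
  destruct (HD 1 Rlt_0_1) as [del [Hdel Happrox]].
  pose proof (Cmod_ge_0 D) as HD0.
  exists (Rmin del (eps / (Cmod D + 1))). split.
  { apply Rmin_pos; [lra | apply Rdiv_lt_0_compat; lra]. }
  intros w Hw. pose proof (Rmin_l del (eps / (Cmod D + 1))) as Hmin1.
  pose proof (Rmin_r del (eps / (Cmod D + 1))) as Hmin2.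
  specialize (Happrox w ltac:(lra)).
  assert (Hsmall : Cmod (w - p) * (Cmod D + 1) <= eps).
  { assert (Hw' : Cmod (w - p) <= eps / (Cmod D + 1)) by lra.
    apply (Rmult_le_compat_r (Cmod D + 1)) in Hw'; [| lra]. unfold Rdiv in Hw'.
    rewrite Rmult_assoc, Rinv_l, Rmult_1_r in Hw' by lra. exact Hw'. }
  replace (g w - g p)%C with ((g w - g p - D * (w - p)) + D * (w - p))%C by ring.
  eapply Rle_trans; [apply Cmod_triangle|]. rewrite Cmod_mult.
  pose proof (Cmod_ge_0 (w - p)). nra.
Qed.

Lemma C_ex_derive_Cinv (p : C) : p <> 0%C -> C_ex_derive Cinv p.
Proof.
  intros Hp. apply (C_ex_derive_of_linear_approx _ p (- / (p * p))%C).
  intros eps Heps. pose proof (proj1 (Cmod_gt_0 p) Hp) as Hp0.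
  set (m := Cmod p) in *.
  exists (Rmin (m / 2) (eps * (m * m * m) / 2)). split.
  { apply Rmin_pos; apply Rdiv_lt_0_compat; repeat apply Rmult_lt_0_compat; lra. }
  intros w Hw. pose proof (Rmin_l (m / 2) (eps * (m * m * m) / 2)).
  pose proof (Rmin_r (m / 2) (eps * (m * m * m) / 2)).
  assert (Hwm : m / 2 <= Cmod w).
  { pose proof (Cmod_sub_ge p (p - w)) as Hrev.
    replace (p - (p - w))%C with w in Hrev by ring. rewrite Cmod_sub_comm in Hrev. fold m in Hrev. lra. }
  assert (Hw0 : w <> 0%C) by (intros E; rewrite E, Cmod_0 in Hwm; lra).
  replace (/ w - / p - - / (p * p) * (w - p))%C with ((w - p) * (w - p) / (p * p * w))%C
    by (field; auto).
  rewrite Cmod_div by (repeat apply Cmult_neq_0; auto). rewrite !Cmod_mult. fold m.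
  pose proof (Cmod_ge_0 (w - p)).
  apply Rle_trans with (Cmod (w - p) * Cmod (w - p) / (m * m * (m / 2))).
  - apply Rmult_le_compat_l; [nra|]. apply Rinv_le_contravar; [|apply Rmult_le_compat_l]; nra.
  - replace (Cmod (w - p) * Cmod (w - p) / (m * m * (m / 2)))
      with (Cmod (w - p) * (2 * Cmod (w - p) / (m * m * m))) by (field; lra).
    rewrite Rmult_comm. apply Rmult_le_compat_r; [lra|].
    apply (Rmult_le_reg_r (m * m * m)); [nra|].
    unfold Rdiv. rewrite Rmult_assoc, Rinv_l, Rmult_1_r by nra.
    lra.
Qed.

Lemma C_ex_derive_inv (g : C -> C) (p : C) :
  C_ex_derive g p -> g p <> 0%C -> C_ex_derive (fun w => / g w)%C p.
Proof.
  intros [Dg Hg] Hgp. destruct (C_ex_derive_Cinv (g p) Hgp) as [Di Hi].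
  eexists. apply (is_derive_comp (K := C_AbsRing) (V := C_NormedModule) Cinv g p Di Dg Hi).
  apply is_derive_C_NormedModule, Hg.
Qed.

(** * Integrals of complex-valued functions of a real variable *)

Definition continuous_RC (h : R -> C) (t : R) : Prop :=
  forall eps, 0 < eps -> exists del, 0 < del /\
    forall s, Rabs (s - t) < del -> Cmod (h s - h t) < eps.

Lemma continuous_RC_ext (h1 h2 : R -> C) (t : R) :
  (forall s, h1 s = h2 s) -> continuous_RC h1 t -> continuous_RC h2 t.
Proof.
  intros E H. replace h2 with h1 by (apply functional_extensionality; exact E). exact H.
Qed.

Lemma continuous_RC_lipschitz (h : R -> C) (t L : R) :
  (forall s, Cmod (h s - h t) <= L * Rabs (s - t)) -> continuous_RC h t.
Proof.
  intros Hh eps Heps. assert (HL : 0 <= L).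
  { specialize (Hh (t + 1)). replace (t + 1 - t) with 1 in Hh by ring.
    rewrite Rabs_R1 in Hh. pose proof (Cmod_ge_0 (h (t + 1) - h t)). lra. }
  exists (eps / (L + 1)). split; [apply Rdiv_lt_0_compat; lra|]. intros s Hs.
  eapply Rle_lt_trans; [apply Hh|].
  apply (Rmult_lt_compat_l (L + 1)) in Hs; [| lra].
  replace ((L + 1) * (eps / (L + 1))) with eps in Hs by (field; lra).
  pose proof (Rabs_pos (s - t)). nra.
Qed.

Lemma continuous_RC_const (k : C) (t : R) : continuous_RC (fun _ => k) t.
Proof.
  apply (continuous_RC_lipschitz _ _ 0). intros s.
  replace (k - k)%C with (RtoC 0) by ring. rewrite Cmod_0. lra.
Qed.

Lemma continuous_RC_cis (t : R) : continuous_RC cis t.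
Proof. apply (continuous_RC_lipschitz _ _ 2), Cmod_cis_sub_le. Qed.

Lemma continuous_RC_plus (h1 h2 : R -> C) (t : R) :
  continuous_RC h1 t -> continuous_RC h2 t -> continuous_RC (fun s => h1 s + h2 s)%C t.
Proof.
  intros H1 H2 eps Heps.
  destruct (H1 (eps / 2)) as [d1 [Hd1 E1]]; [lra|].
  destruct (H2 (eps / 2)) as [d2 [Hd2 E2]]; [lra|].
  exists (Rmin d1 d2). split; [apply Rmin_pos; auto|]. intros s Hs.
  specialize (E1 s (Rlt_le_trans _ _ _ Hs (Rmin_l _ _))).
  specialize (E2 s (Rlt_le_trans _ _ _ Hs (Rmin_r _ _))).
  replace (h1 s + h2 s - (h1 t + h2 t))%C with ((h1 s - h1 t) + (h2 s - h2 t))%C by ring.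
  eapply Rle_lt_trans; [apply Cmod_triangle | lra].
Qed.

Lemma continuous_RC_mult (h1 h2 : R -> C) (t : R) :
  continuous_RC h1 t -> continuous_RC h2 t -> continuous_RC (fun s => h1 s * h2 s)%C t.
Proof.
  intros H1 H2 eps Heps.
  set (M1 := Cmod (h1 t) + 1). set (M2 := Cmod (h2 t) + 1).
  pose proof (Cmod_ge_0 (h1 t)). pose proof (Cmod_ge_0 (h2 t)).
  destruct (H1 (Rmin 1 (eps / (2 * M2)))) as [d1 [Hd1 E1]].
  { apply Rmin_pos; [lra | apply Rdiv_lt_0_compat; unfold M2; lra]. }
  destruct (H2 (eps / (2 * M1))) as [d2 [Hd2 E2]].
  { apply Rdiv_lt_0_compat; unfold M1; lra. }
  exists (Rmin d1 d2). split; [apply Rmin_pos; auto|]. intros s Hs.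
  specialize (E1 s (Rlt_le_trans _ _ _ Hs (Rmin_l _ _))).
  specialize (E2 s (Rlt_le_trans _ _ _ Hs (Rmin_r _ _))).
  pose proof (Rmin_l 1 (eps / (2 * M2))). pose proof (Rmin_r 1 (eps / (2 * M2))).
  assert (Hh1 : Cmod (h1 s) <= M1).
  { unfold M1. replace (h1 s) with (h1 t + (h1 s - h1 t))%C by ring.
    eapply Rle_trans; [apply Cmod_triangle | lra]. }
  replace (h1 s * h2 s - h1 t * h2 t)%C with (h1 s * (h2 s - h2 t) + (h1 s - h1 t) * h2 t)%C by ring.
  eapply Rle_lt_trans; [apply Cmod_triangle|]. rewrite !Cmod_mult.
  assert (X1 : Cmod (h1 s) * Cmod (h2 s - h2 t) <= M1 * (eps / (2 * M1))).
  { apply Rmult_le_compat; try apply Cmod_ge_0; lra. }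
  assert (X2 : Cmod (h1 s - h1 t) * Cmod (h2 t) < eps / (2 * M2) * M2).
  { apply Rle_lt_trans with (eps / (2 * M2) * Cmod (h2 t)).
    - apply Rmult_le_compat_r; [apply Cmod_ge_0 | lra].
    - apply Rmult_lt_compat_l; [apply Rdiv_lt_0_compat; unfold M2; lra | unfold M2; lra]. }
  replace (M1 * (eps / (2 * M1))) with (eps / 2) in X1 by (field; unfold M1; lra).
  replace (eps / (2 * M2) * M2) with (eps / 2) in X2 by (field; unfold M2; lra).
  lra.
Qed.

Lemma continuous_RC_Cconj (h : R -> C) (t : R) :
  continuous_RC h t -> continuous_RC (fun s => Cconj (h s)) t.
Proof.
  intros H eps Heps. destruct (H eps Heps) as [d [Hd E]]. exists d; split; auto.
  intros s Hs. rewrite <- Cminus_conj, Cmod_conj. auto.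
Qed.

Lemma continuous_RC_comp (g : C -> C) (phi : R -> C) (t L : R) :
  C_ex_derive g (phi t) -> (forall s, Cmod (phi s - phi t) <= L * Rabs (s - t)) ->
  continuous_RC (fun s => g (phi s)) t.
Proof.
  intros Hg Hphi eps Heps.
  destruct (C_ex_derive_continuous g (phi t) Hg (eps / 2)) as [d [Hd E]]; [lra|].
  destruct (continuous_RC_lipschitz phi t L Hphi d Hd) as [d' [Hd' E']].
  exists d'. split; [exact Hd'|]. intros s Hs.
  specialize (E (phi s) (E' s Hs)). lra.
Qed.

Notation CR := C_R_CompleteNormedModule.

Definition CInt (h : R -> C) (a b : R) : C := RInt (V := CR) h a b.

Lemma norm_CR (x : C) : norm (K := R_AbsRing) (V := CR) x = Cmod x.
Proof.
  destruct x as [a b]. unfold norm; simpl. unfold prod_norm, Cmod; simpl.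
  f_equal. change (norm a) with (Rabs a). change (norm b) with (Rabs b).
  rewrite !Rmult_1_r, <- !Rabs_mult, !Rabs_right; nra.
Qed.

Lemma continuous_RC_continuous (h : R -> C) (t : R) :
  continuous_RC h t -> continuous (T := R_UniformSpace) (U := CR) h t.
Proof.
  intros H. apply filterlim_locally. intros eps.
  destruct (H eps (cond_pos eps)) as [d [Hd Hs]].
  exists (mkposreal d Hd). intros s Hsd. specialize (Hs s Hsd).
  split; [change (Rabs (Re (h s - h t)) < eps) | change (Rabs (Im (h s - h t)) < eps)];
    eapply Rle_lt_trans; [apply re_le_Cmod | exact Hs | apply Cmod_Im_le | exact Hs].
Qed.

Lemma is_RInt_CInt (h : R -> C) (a b : R) :
  a <= b -> (forall t, a <= t <= b -> continuous_RC h t) -> is_RInt (V := CR) h a b (CInt h a b).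
Proof.
  intros Hab Hh. apply (RInt_correct (V := CR)), ex_RInt_continuous. intros t Ht.
  rewrite Rmin_left, Rmax_right in Ht by lra. apply continuous_RC_continuous, Hh, Ht.
Qed.

Lemma Cmod_CInt_le (h : R -> C) (a b M : R) :
  a <= b -> (forall t, a <= t <= b -> continuous_RC h t) ->
  (forall t, a <= t <= b -> Cmod (h t) <= M) -> Cmod (CInt h a b) <= (b - a) * M.
Proof.
  intros Hab Hh HM. rewrite <- norm_CR.
  apply (norm_RInt_le_const (V := CR) h a b); [exact Hab | | apply is_RInt_CInt; auto].
  intros; rewrite norm_CR; auto.
Qed.

Lemma CInt_Chasles (h : R -> C) (a m b : R) : a <= m <= b ->
  (forall t, a <= t <= b -> continuous_RC h t) -> CInt h a b = (CInt h a m + CInt h m b)%C.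
Proof.
  intros Hm Hh. unfold CInt. rewrite <- (RInt_Chasles (V := CR) h a m b); [reflexivity | ..];
    eexists; apply is_RInt_CInt; try lra; intros; apply Hh; lra.
Qed.

Lemma CInt_ext (h1 h2 : R -> C) (a b : R) :
  (forall t, h1 t = h2 t) -> CInt h1 a b = CInt h2 a b.
Proof. intros E. f_equal. apply functional_extensionality, E. Qed.

Lemma CInt_const (k : C) (a b : R) : CInt (fun _ => k) a b = (RtoC (b - a) * k)%C.
Proof.
  unfold CInt. apply (is_RInt_unique (V := CR)).
  replace (RtoC (b - a) * k)%C with (scal (K := R_AbsRing) (V := CR) (b - a) k)
    by (apply injective_projections; simpl; unfold scal; simpl; unfold mult; simpl; ring).
  apply (is_RInt_const (V := CR)).
Qed.

Lemma CInt_plus (h1 h2 : R -> C) (a b : R) : a <= b ->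
  (forall t, a <= t <= b -> continuous_RC h1 t) -> (forall t, a <= t <= b -> continuous_RC h2 t) ->
  CInt (fun t => h1 t + h2 t)%C a b = (CInt h1 a b + CInt h2 a b)%C.
Proof.
  intros Hab H1 H2. apply (is_RInt_unique (V := CR)).
  apply (is_RInt_plus (V := CR)); apply is_RInt_CInt; auto.
Qed.

Lemma CInt_minus (h1 h2 : R -> C) (a b : R) : a <= b ->
  (forall t, a <= t <= b -> continuous_RC h1 t) -> (forall t, a <= t <= b -> continuous_RC h2 t) ->
  CInt (fun t => h1 t - h2 t)%C a b = (CInt h1 a b - CInt h2 a b)%C.
Proof.
  intros Hab H1 H2. apply (is_RInt_unique (V := CR)).
  apply (is_RInt_minus (V := CR)); apply is_RInt_CInt; auto.
Qed.

Lemma CInt_scal (k : C) (h : R -> C) (a b : R) : a <= b ->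
  (forall t, a <= t <= b -> continuous_RC h t) ->
  CInt (fun t => k * h t)%C a b = (k * CInt h a b)%C.
Proof.
  intros Hab Hh. pose proof (is_RInt_CInt h a b Hab Hh) as I.
  apply (is_RInt_unique (V := CR)). set (J := CInt h a b) in *.
  change (k * J)%C with ((Re k * Re J - Im k * Im J, Re k * Im J + Im k * Re J) : C).
  pose proof (is_RInt_fct_extend_fst _ _ _ _ I) as I1.
  pose proof (is_RInt_fct_extend_snd _ _ _ _ I) as I2.
  apply is_RInt_fct_extend_pair; simpl.
  - apply (is_RInt_minus (V := R_NormedModule));
      apply (is_RInt_scal (V := R_NormedModule)); assumption.
  - apply (is_RInt_plus (V := R_NormedModule));
      apply (is_RInt_scal (V := R_NormedModule)); assumption.
Qed.

(** * Goursat's lemma for a homotopy of circles *)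

Lemma Rabs_affine_le (u v a b x : R) : a <= x <= b ->
  Rabs (u + x * v) <= Rabs u + Rabs v * (Rabs a + Rabs b).
Proof.
  intros Hx. eapply Rle_trans; [apply Rabs_triang|].
  rewrite Rabs_mult, (Rmult_comm (Rabs x)).
  apply Rplus_le_compat_l, Rmult_le_compat_l; [apply Rabs_pos|].
  apply Rabs_le. pose proof (Rabs_pos a); pose proof (Rabs_pos b).
  pose proof (Rle_abs b); pose proof (Rle_abs (- a)). rewrite Rabs_Ropp in *. lra.
Qed.

Lemma similar_rect_perimeter_sq (W H u v : R) : u * H = v * W ->
  (u + v) * (u + v) * (W * H) = (W + H) * (W + H) * (u * v).
Proof.
  intros E. apply Rminus_diag_uniq.
  replace ((u + v) * (u + v) * (W * H) - (W + H) * (W + H) * (u * v))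
    with ((u * H - v * W) * (u * W - v * H)) by ring.
  rewrite E. ring.
Qed.

Lemma similar_rect_eps (eps0 W H L u v : R) : W + H <> 0 -> L <> 0 -> u * H = v * W ->
  2 * (u + v) * (eps0 * W * H / (2 * (L * L) * ((W + H) * (W + H))) * (L * (u + v))) * L
  = eps0 * (u * v).
Proof.
  intros HWH HL Hsim.
  replace (2 * (u + v) * (eps0 * W * H / (2 * (L * L) * ((W + H) * (W + H))) * (L * (u + v))) * L)
    with (eps0 * ((u + v) * (u + v) * (W * H)) / ((W + H) * (W + H))) by (field; auto).
  rewrite (similar_rect_perimeter_sq W H u v Hsim). field. exact HWH.
Qed.

Definition affine_primitive (al be w : C) : C := (al * w + be * w * w / 2)%C.

Section CircleHomotopy.
Variables (p0 p1 : C) (r0 r1 : R).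

Definition circ_homotopy (x y : R) : C := (p0 + RtoC x * p1 + RtoC (r0 + x * r1) * cis y)%C.
Definition circ_homotopy_dx (y : R) : C := (p1 + RtoC r1 * cis y)%C.
Definition circ_homotopy_dy (x y : R) : C := (RtoC (r0 + x * r1) * (Ci * cis y))%C.

Lemma is_RInt_affine_dx (al be : C) (y a b : R) :
  is_RInt (V := CR) (fun x => (al + be * circ_homotopy x y) * circ_homotopy_dx y)%C a b
    (affine_primitive al be (circ_homotopy b y) - affine_primitive al be (circ_homotopy a y))%C.
Proof.
  set (F := fun x => affine_primitive al be (circ_homotopy x y)).
  replace (affine_primitive al be (circ_homotopy b y) - affine_primitive al be (circ_homotopy a y))%C
    with ((Re (F b) - Re (F a), Im (F b) - Im (F a)) : C)
    by (apply injective_projections; simpl; ring).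
  apply is_RInt_fct_extend_pair;
    [ apply (is_RInt_derive (V := R_CompleteNormedModule) (fun t => Re (F t)))
    | apply (is_RInt_derive (V := R_CompleteNormedModule) (fun t => Im (F t))) ];
    intros t _; unfold F, affine_primitive, circ_homotopy, circ_homotopy_dy, cis; simpl.
  1, 3: auto_derive; auto; simpl; field.
  all: apply (ex_derive_continuous (V := R_NormedModule)); auto_derive; auto.
Qed.

Lemma is_RInt_affine_dy (al be : C) (x c d : R) :
  is_RInt (V := CR) (fun y => (al + be * circ_homotopy x y) * circ_homotopy_dy x y)%C c d
    (affine_primitive al be (circ_homotopy x d) - affine_primitive al be (circ_homotopy x c))%C.
Proof.
  set (F := fun y => affine_primitive al be (circ_homotopy x y)).
  replace (affine_primitive al be (circ_homotopy x d) - affine_primitive al be (circ_homotopy x c))%C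
    with ((Re (F d) - Re (F c), Im (F d) - Im (F c)) : C)
    by (apply injective_projections; simpl; ring).
  apply is_RInt_fct_extend_pair;
    [ apply (is_RInt_derive (V := R_CompleteNormedModule) (fun t => Re (F t)))
    | apply (is_RInt_derive (V := R_CompleteNormedModule) (fun t => Im (F t))) ];
    intros t _; unfold F, affine_primitive, circ_homotopy, circ_homotopy_dy, cis; simpl.
  1, 3: auto_derive; auto; simpl; field.
  all: apply (ex_derive_continuous (V := R_NormedModule)); auto_derive; auto.
Qed.

Lemma circ_homotopy_sub_le (x y x' y' : R) :
  Cmod (circ_homotopy x y - circ_homotopy x' y')
  <= (Cmod p1 + Rabs r1) * Rabs (x - x') + 2 * Rabs (r0 + x' * r1) * Rabs (y - y').
Proof.
  replace (circ_homotopy x y - circ_homotopy x' y')%C with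
    (RtoC (x - x') * p1 + RtoC ((x - x') * r1) * cis y + RtoC (r0 + x' * r1) * (cis y - cis y'))%C
    by (unfold circ_homotopy; apply injective_projections; simpl; ring).
  eapply Rle_trans; [apply Cmod_triangle|].
  eapply Rle_trans; [apply Rplus_le_compat_r, Cmod_triangle|].
  rewrite !Cmod_RtoC_mult, Cmod_cis, Rabs_mult.
  pose proof (Cmod_cis_sub_le y' y). pose proof (Rabs_pos (r0 + x' * r1)).
  pose proof (Rabs_pos (x - x')). pose proof (Rabs_pos r1). pose proof (Cmod_ge_0 p1).
  assert (Rabs (r0 + x' * r1) * Cmod (cis y - cis y') <= Rabs (r0 + x' * r1) * (2 * Rabs (y - y')))
    by (apply Rmult_le_compat_l; auto).
  nra.
Qed.

Lemma circ_homotopy_sub_le_rect (L a b c d x y x' y' : R) :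
  Cmod p1 + Rabs r1 <= L -> 2 * Rabs (r0 + x' * r1) <= L ->
  a <= x <= b -> a <= x' <= b -> c <= y <= d -> c <= y' <= d ->
  Cmod (circ_homotopy x y - circ_homotopy x' y') <= L * ((b - a) + (d - c)).
Proof.
  intros HL1 HL2 Hx Hx' Hy Hy'. eapply Rle_trans; [apply circ_homotopy_sub_le|].
  assert (Rabs (x - x') <= b - a) by (apply Rabs_le; lra).
  assert (Rabs (y - y') <= d - c) by (apply Rabs_le; lra).
  pose proof (Cmod_ge_0 p1). pose proof (Rabs_pos r1). pose proof (Rabs_pos (r0 + x' * r1)).
  assert ((Cmod p1 + Rabs r1) * Rabs (x - x') <= L * (b - a))
    by (apply Rmult_le_compat; try apply Rabs_pos; lra).
  assert (2 * Rabs (r0 + x' * r1) * Rabs (y - y') <= L * (d - c))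
    by (apply Rmult_le_compat; try apply Rabs_pos; lra).
  lra.
Qed.

Lemma Cmod_circ_homotopy_dx_le (y : R) : Cmod (circ_homotopy_dx y) <= Cmod p1 + Rabs r1.
Proof.
  unfold circ_homotopy_dx. eapply Rle_trans; [apply Cmod_triangle|].
  rewrite Cmod_RtoC_mult, Cmod_cis. lra.
Qed.

Lemma Cmod_circ_homotopy_dy (x y : R) : Cmod (circ_homotopy_dy x y) = Rabs (r0 + x * r1).
Proof. unfold circ_homotopy_dy. rewrite Cmod_RtoC_mult, Cmod_mult, Cmod_cis, Cmod_Ci. ring. Qed.

Variable g : C -> C.

Definition integrand_x (y x : R) : C := (g (circ_homotopy x y) * circ_homotopy_dx y)%C.
Definition integrand_y (x y : R) : C := (g (circ_homotopy x y) * circ_homotopy_dy x y)%C.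

Definition boundary_integral (a b c d : R) : C :=
  (CInt (integrand_x c) a b + CInt (integrand_y b) c d
   - CInt (integrand_x d) a b - CInt (integrand_y a) c d)%C.

Lemma continuous_RC_integrand_x (x y : R) :
  C_ex_derive g (circ_homotopy x y) -> continuous_RC (integrand_x y) x.
Proof.
  intros Hg. apply continuous_RC_mult; [| apply continuous_RC_const].
  apply (continuous_RC_comp g (fun x => circ_homotopy x y) x (Cmod p1 + Rabs r1) Hg).
  intros s. eapply Rle_trans; [apply circ_homotopy_sub_le|].
  rewrite Rminus_diag, Rabs_R0. lra.
Qed.

Lemma continuous_RC_integrand_y (x y : R) :
  C_ex_derive g (circ_homotopy x y) -> continuous_RC (integrand_y x) y.
Proof.
  intros Hg. apply continuous_RC_mult.
  - apply (continuous_RC_comp g (circ_homotopy x) y (2 * Rabs (r0 + x * r1)) Hg).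
    intros s. eapply Rle_trans; [apply circ_homotopy_sub_le|].
    rewrite Rminus_diag, Rabs_R0. lra.
  - apply continuous_RC_mult; [apply continuous_RC_const|].
    apply continuous_RC_mult; [apply continuous_RC_const | apply continuous_RC_cis].
Qed.

Lemma CInt_integrand_x_affine_error (al be : C) (y a b M : R) : a <= b ->
  (forall x, a <= x <= b -> continuous_RC (integrand_x y) x) ->
  (forall x, a <= x <= b -> Cmod (g (circ_homotopy x y) - (al + be * circ_homotopy x y)) <= M) ->
  Cmod (CInt (integrand_x y) a b
        - (affine_primitive al be (circ_homotopy b y) - affine_primitive al be (circ_homotopy a y)))
  <= (b - a) * (M * (Cmod p1 + Rabs r1)).
Proof.
  intros Hab Hc HM.
  pose proof (is_RInt_minus _ _ _ _ _ _ (is_RInt_CInt _ a b Hab Hc)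
                (is_RInt_affine_dx al be y a b)) as I.
  rewrite <- norm_CR. refine (norm_RInt_le_const _ a b _ _ Hab _ I).
  intros x Hx. rewrite norm_CR.
  change (Cmod (integrand_x y x - (al + be * circ_homotopy x y) * circ_homotopy_dx y)
          <= M * (Cmod p1 + Rabs r1)).
  unfold integrand_x.
  replace (g (circ_homotopy x y) * circ_homotopy_dx y
           - (al + be * circ_homotopy x y) * circ_homotopy_dx y)%C
    with ((g (circ_homotopy x y) - (al + be * circ_homotopy x y)) * circ_homotopy_dx y)%C by ring.
  rewrite Cmod_mult.
  apply Rmult_le_compat; auto using Cmod_ge_0, Cmod_circ_homotopy_dx_le.
Qed.

Lemma CInt_integrand_y_affine_error (al be : C) (x c d M : R) : c <= d ->
  (forall y, c <= y <= d -> continuous_RC (integrand_y x) y) ->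
  (forall y, c <= y <= d -> Cmod (g (circ_homotopy x y) - (al + be * circ_homotopy x y)) <= M) ->
  Cmod (CInt (integrand_y x) c d
        - (affine_primitive al be (circ_homotopy x d) - affine_primitive al be (circ_homotopy x c)))
  <= (d - c) * (M * Rabs (r0 + x * r1)).
Proof.
  intros Hcd Hc HM.
  pose proof (is_RInt_minus _ _ _ _ _ _ (is_RInt_CInt _ c d Hcd Hc)
                (is_RInt_affine_dy al be x c d)) as I.
  rewrite <- norm_CR. refine (norm_RInt_le_const _ c d _ _ Hcd _ I).
  intros y Hy. rewrite norm_CR.
  change (Cmod (integrand_y x y - (al + be * circ_homotopy x y) * circ_homotopy_dy x y)
          <= M * Rabs (r0 + x * r1)).
  unfold integrand_y.
  replace (g (circ_homotopy x y) * circ_homotopy_dy x y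
           - (al + be * circ_homotopy x y) * circ_homotopy_dy x y)%C
    with ((g (circ_homotopy x y) - (al + be * circ_homotopy x y)) * circ_homotopy_dy x y)%C by ring.
  rewrite Cmod_mult, Cmod_circ_homotopy_dy.
  apply Rmult_le_compat_r; auto using Rabs_pos.
Qed.

Variables a0 b0 c0 d0 : R.
Hypothesis Hg : forall x y, a0 <= x <= b0 -> c0 <= y <= d0 -> C_ex_derive g (circ_homotopy x y).

Lemma boundary_integral_quadrisect (a b c d : R) :
  a0 <= a -> a <= b -> b <= b0 -> c0 <= c -> c <= d -> d <= d0 ->
  let m := (a + b) / 2 in let m' := (c + d) / 2 in
  boundary_integral a b c d = (boundary_integral a m c m' + boundary_integral m b c m'
    + boundary_integral a m m' d + boundary_integral m b m' d)%C.
Proof.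
  intros. unfold boundary_integral, m, m'.
  rewrite (CInt_Chasles (integrand_x c) a ((a + b) / 2) b),
    (CInt_Chasles (integrand_x d) a ((a + b) / 2) b),
    (CInt_Chasles (integrand_y a) c ((c + d) / 2) d),
    (CInt_Chasles (integrand_y b) c ((c + d) / 2) d)
    by (try lra; intros;
        first [apply continuous_RC_integrand_x | apply continuous_RC_integrand_y]; apply Hg; lra).
  ring.
Qed.

Lemma Cmod_boundary_integral_affine_le (al be : C) (a b c d M L : R) :
  a0 <= a -> a <= b -> b <= b0 -> c0 <= c -> c <= d -> d <= d0 ->
  (forall x y, a <= x <= b -> c <= y <= d ->
     Cmod (g (circ_homotopy x y) - (al + be * circ_homotopy x y)) <= M) ->
  Cmod p1 + Rabs r1 <= L -> (forall x, a <= x <= b -> Rabs (r0 + x * r1) <= L) ->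
  Cmod (boundary_integral a b c d) <= 2 * ((b - a) + (d - c)) * M * L.
Proof.
  intros Ha Hab Hb Hc Hcd Hd HM HL1 HL2.
  assert (HM0 : 0 <= M)
    by (eapply Rle_trans; [apply Cmod_ge_0 | apply (HM a c); lra]).
  set (F := fun x y => affine_primitive al be (circ_homotopy x y)).
  pose proof (CInt_integrand_x_affine_error al be c a b M Hab
    (fun x Hx => continuous_RC_integrand_x x c (Hg x c ltac:(lra) ltac:(lra)))
    (fun x Hx => HM x c Hx ltac:(lra))) as E1.
  pose proof (CInt_integrand_y_affine_error al be b c d M Hcd
    (fun y Hy => continuous_RC_integrand_y b y (Hg b y ltac:(lra) ltac:(lra)))
    (fun y Hy => HM b y ltac:(lra) Hy)) as E2.
  pose proof (CInt_integrand_x_affine_error al be d a b M Hab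
    (fun x Hx => continuous_RC_integrand_x x d (Hg x d ltac:(lra) ltac:(lra)))
    (fun x Hx => HM x d Hx ltac:(lra))) as E3.
  pose proof (CInt_integrand_y_affine_error al be a c d M Hcd
    (fun y Hy => continuous_RC_integrand_y a y (Hg a y ltac:(lra) ltac:(lra)))
    (fun y Hy => HM a y ltac:(lra) Hy)) as E4.
  fold (F b c) (F a c) (F b d) (F a d) in E1, E2, E3, E4.
  set (T1 := (CInt (integrand_x c) a b - (F b c - F a c))%C) in E1.
  set (T2 := (CInt (integrand_y b) c d - (F b d - F b c))%C) in E2.
  set (T3 := (CInt (integrand_x d) a b - (F b d - F a d))%C) in E3.
  set (T4 := (CInt (integrand_y a) c d - (F a d - F a c))%C) in E4.
  (* the values of the primitive [F] at the four corners cancel *)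
  replace (boundary_integral a b c d) with (T1 + T2 + - T3 + - T4)%C
    by (unfold boundary_integral, T1, T2, T3, T4; ring).
  eapply Rle_trans; [apply Cmod_triangle|]. rewrite Cmod_opp.
  eapply Rle_trans; [apply Rplus_le_compat_r, Cmod_triangle|]. rewrite Cmod_opp.
  eapply Rle_trans; [apply Rplus_le_compat_r, Rplus_le_compat_r, Cmod_triangle|].
  pose proof (HL2 a ltac:(lra)). pose proof (HL2 b ltac:(lra)).
  assert (Hx : M * (Cmod p1 + Rabs r1) <= M * L) by (apply Rmult_le_compat_l; lra).
  assert (Hya : M * Rabs (r0 + a * r1) <= M * L) by (apply Rmult_le_compat_l; lra).
  assert (Hyb : M * Rabs (r0 + b * r1) <= M * L) by (apply Rmult_le_compat_l; lra).
  apply Rmult_le_compat_l with (r := b - a) in Hx; [| lra].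
  apply Rmult_le_compat_l with (r := d - c) in Hya; [| lra].
  apply Rmult_le_compat_l with (r := d - c) in Hyb; [| lra].
  nra.
Qed.

Lemma Cmod_boundary_integral_local (eps0 : R) (x0 y0 : R) :
  a0 < b0 -> c0 < d0 -> 0 < eps0 -> a0 <= x0 <= b0 -> c0 <= y0 <= d0 -> exists del, 0 < del /\
  forall a b c d, a0 <= a -> b <= b0 -> c0 <= c -> d <= d0 ->
    a <= x0 <= b -> c <= y0 <= d -> b - a < del -> d - c < del ->
    (b - a) * (d0 - c0) = (d - c) * (b0 - a0) ->
    Cmod (boundary_integral a b c d) <= eps0 * ((b - a) * (d - c)).
Proof.
  intros Hab0 Hcd0 Heps0 Hx0 Hy0.
  destruct (C_ex_derive_linear_approx g _ (Hg x0 y0 Hx0 Hy0)) as [D HD].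
  set (p := circ_homotopy x0 y0) in *.
  set (K := Rabs r0 + Rabs r1 * (Rabs a0 + Rabs b0)).
  assert (HK : forall x, a0 <= x <= b0 -> Rabs (r0 + x * r1) <= K)
    by (intros; apply Rabs_affine_le; lra).
  set (L := Cmod p1 + Rabs r1 + 2 * K + 1).
  assert (HK0 : 0 <= K) by (pose proof (HK a0 ltac:(lra)); pose proof (Rabs_pos (r0 + a0 * r1)); lra).
  pose proof (Cmod_ge_0 p1). pose proof (Rabs_pos r1).
  set (W := b0 - a0). set (Ht := d0 - c0).
  set (eps := eps0 * W * Ht / (2 * (L * L) * ((W + Ht) * (W + Ht)))).
  assert (Heps : 0 < eps).
  { unfold eps, W, Ht, L. apply Rdiv_lt_0_compat; repeat apply Rmult_lt_0_compat; nra. }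
  destruct (HD eps Heps) as [eta [Heta Happrox]].
  exists (eta / (2 * L)). split; [apply Rdiv_lt_0_compat; unfold L; lra|].
  intros a b c d Ha Hb Hc Hd Hxab Hycd Hba Hdc Hsim.
  set (s := (b - a) + (d - c)).
  assert (Hs : L * s < eta).
  { apply (Rmult_lt_compat_l L) in Hba; [| unfold L; lra].
    apply (Rmult_lt_compat_l L) in Hdc; [| unfold L; lra].
    replace (L * (eta / (2 * L))) with (eta / 2) in Hba, Hdc by (field; unfold L; lra).
    unfold s. lra. }
  assert (Hclose : forall x y, a <= x <= b -> c <= y <= d -> Cmod (circ_homotopy x y - p) <= L * s).
  { intros x y Hx Hy. pose proof (HK x0 Hx0).
    apply circ_homotopy_sub_le_rect; unfold L; lra. }
  assert (Hbound : Cmod (boundary_integral a b c d) <= 2 * s * (eps * (L * s)) * L).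
  { apply (Cmod_boundary_integral_affine_le (g p - D * p) D); try lra.
    - intros x y Hx Hy.
      replace (g (circ_homotopy x y) - (g p - D * p + D * circ_homotopy x y))%C
        with (g (circ_homotopy x y) - g p - D * (circ_homotopy x y - p))%C by ring.
      eapply Rle_trans; [apply Happrox; specialize (Hclose x y Hx Hy); lra|].
      apply Rmult_le_compat_l; [lra | exact (Hclose x y Hx Hy)].
    - unfold L; lra.
    - intros x Hx. pose proof (HK x ltac:(lra)). unfold L; lra. }
  replace (eps0 * ((b - a) * (d - c))) with (2 * s * (eps * (L * s)) * L); [exact Hbound|].
  unfold eps, s. apply similar_rect_eps; [unfold W, Ht; lra | unfold L; lra | exact Hsim].
Qed.

Theorem boundary_integral_eq_0 : a0 < b0 -> c0 < d0 -> boundary_integral a0 b0 c0 d0 = 0%C.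
Proof.
  intros Hab0 Hcd0. apply Cmod_eq_0, Rle_antisym; [apply Rnot_lt_le; intros Hpos | apply Cmod_ge_0].
  set (eps0 := Cmod (boundary_integral a0 b0 c0 d0) / (2 * ((b0 - a0) * (d0 - c0)))).
  assert (Heps0 : 0 < eps0) by (apply Rdiv_lt_0_compat; nra).
  assert (Hle : Cmod (boundary_integral a0 b0 c0 d0) <= eps0 * ((b0 - a0) * (d0 - c0))).
  { apply (quadrisection_principle (fun a b c d =>
             Cmod (boundary_integral a b c d) <= eps0 * ((b - a) * (d - c))) a0 b0 c0 d0 Hab0 Hcd0).
    - intros a b c d Ha Hab Hb Hc Hcd Hd H1 H2 H3 H4.
      rewrite (boundary_integral_quadrisect a b c d) by lra.
      eapply Rle_trans; [apply Cmod_triangle|].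
      eapply Rle_trans; [apply Rplus_le_compat_r, Cmod_triangle|].
      eapply Rle_trans; [apply Rplus_le_compat_r, Rplus_le_compat_r, Cmod_triangle|].
      replace (eps0 * ((b - a) * (d - c))) with
        (eps0 * (((a + b) / 2 - a) * ((c + d) / 2 - c)) + eps0 * ((b - (a + b) / 2) * ((c + d) / 2 - c))
         + eps0 * (((a + b) / 2 - a) * (d - (c + d) / 2))
         + eps0 * ((b - (a + b) / 2) * (d - (c + d) / 2))) by field.
      lra.
    - intros x y Hx Hy. apply Cmod_boundary_integral_local; assumption. }
  unfold eps0 in Hle.
  replace (Cmod (boundary_integral a0 b0 c0 d0) / (2 * ((b0 - a0) * (d0 - c0)))
           * ((b0 - a0) * (d0 - c0)))
    with (Cmod (boundary_integral a0 b0 c0 d0) / 2) in Hle by (field; nra).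
  lra.
Qed.
End CircleHomotopy.

(** * Cauchy's integral formula *)

Lemma continuous_RC_circle (G : C -> C) (c : C) (t y : R) :
  C_ex_derive G (c + RtoC t * cis y)%C -> continuous_RC (fun y => G (c + RtoC t * cis y)%C) y.
Proof.
  intros HG. apply (continuous_RC_comp G (fun y => c + RtoC t * cis y)%C y (2 * Rabs t) HG).
  intros s. replace (c + RtoC t * cis s - (c + RtoC t * cis y))%C with (RtoC t * (cis s - cis y))%C
    by ring.
  rewrite Cmod_RtoC_mult. pose proof (Cmod_cis_sub_le y s). pose proof (Rabs_pos t). nra.
Qed.

Lemma continuous_RC_centred_circle (G : C -> C) (r y : R) :
  C_ex_derive G (RtoC r * cis y)%C -> continuous_RC (fun y => G (RtoC r * cis y)%C) y.
Proof.
  intros HG. refine (continuous_RC_ext _ _ y _ (continuous_RC_circle G 0 r y _)).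
  - intros s. rewrite Cplus_0_l. reflexivity.
  - rewrite Cplus_0_l. exact HG.
Qed.

Definition circle_integral (g : C -> C) (c : C) (t : R) : C :=
  CInt (fun y => g (c + RtoC t * cis y) * (RtoC t * (Ci * cis y)))%C 0 (2 * PI).

Lemma circ_homotopy_between_circles (c : C) (r t x y : R) :
  0 < t -> Cmod c + t <= r -> 0 <= x <= 1 ->
  Cmod (circ_homotopy c (- c) t (r - t) x y) <= r /\ circ_homotopy c (- c) t (r - t) x y <> c.
Proof.
  intros Ht Hr Hx. pose proof (Cmod_ge_0 c).
  set (s := t + x * (r - t)). assert (Hs : t <= s) by (unfold s; nra).
  replace (circ_homotopy c (- c) t (r - t) x y) with (RtoC (1 - x) * c + RtoC s * cis y)%C
    by (unfold circ_homotopy, s; apply injective_projections; simpl; ring).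
  split.
  - eapply Rle_trans; [apply Cmod_triangle|]. rewrite !Cmod_RtoC_mult, Cmod_cis.
    rewrite (Rabs_right (1 - x)), (Rabs_right s) by lra. unfold s. nra.
  - intros E. assert (E' : (RtoC s * cis y)%C = (RtoC x * c)%C).
    { replace (RtoC s * cis y)%C with (RtoC (1 - x) * c + RtoC s * cis y - RtoC (1 - x) * c)%C
        by ring.
      rewrite E. apply injective_projections; simpl; ring. }
    apply (f_equal Cmod) in E'. rewrite !Cmod_RtoC_mult, Cmod_cis, !Rabs_right in E' by lra.
    unfold s in *. nra.
Qed.

Lemma circle_integral_eq (g : C -> C) (c : C) (r t : R) : 0 < t -> Cmod c + t <= r ->
  (forall w, Cmod w <= r -> w <> c -> C_ex_derive g w) ->
  circle_integral g 0 r = circle_integral g c t.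
Proof.
  intros Ht Hr Hg.
  assert (HPI : 0 < PI) by apply PI_RGT_0.
  assert (H0 : boundary_integral c (- c) t (r - t) g 0 1 0 (2 * PI) = 0%C).
  { apply boundary_integral_eq_0; try lra. intros x y Hx _.
    destruct (circ_homotopy_between_circles c r t x y Ht Hr Hx). apply Hg; auto. }
  unfold boundary_integral in H0.
  rewrite (CInt_ext (integrand_x c (- c) t (r - t) g (2 * PI)) (integrand_x c (- c) t (r - t) g 0))
    in H0 by (intros; unfold integrand_x, circ_homotopy, circ_homotopy_dx; rewrite cis_2PI; reflexivity).
  replace (CInt (integrand_y c (- c) t (r - t) g 1) 0 (2 * PI)) with (circle_integral g 0 r) in H0
    by (apply CInt_ext; intros y; unfold integrand_y, circ_homotopy, circ_homotopy_dy;
        f_equal; [f_equal|]; apply injective_projections; simpl; ring).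
  replace (CInt (integrand_y c (- c) t (r - t) g 0) 0 (2 * PI)) with (circle_integral g c t) in H0
    by (apply CInt_ext; intros y; unfold integrand_y, circ_homotopy, circ_homotopy_dy;
        f_equal; [f_equal|]; apply injective_projections; simpl; ring).
  set (I := CInt (integrand_x c (- c) t (r - t) g 0) 0 1) in H0.
  replace (circle_integral g 0 r)
    with ((I + circle_integral g 0 r - I - circle_integral g c t) + circle_integral g c t)%C
    by ring.
  rewrite H0. ring.
Qed.

Lemma C_ex_derive_div_sub (F : C -> C) (c w : C) :
  C_ex_derive F w -> w <> c -> C_ex_derive (fun w => F w / (w - c))%C w.
Proof.
  intros HF Hw. apply C_ex_derive_mult; [exact HF|].
  apply C_ex_derive_inv; [| intros E; apply Hw, Ceq_minus, E].
  apply C_ex_derive_minus; [apply C_ex_derive_id | apply C_ex_derive_const].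
Qed.

Lemma circle_point_neq (c : C) (r y : R) : Cmod c < r -> (RtoC r * cis y)%C <> c.
Proof.
  intros Hc E. apply (f_equal Cmod) in E. rewrite Cmod_RtoC_mult, Cmod_cis, Rabs_right in E.
  - lra.
  - pose proof (Cmod_ge_0 c). lra.
Qed.

Lemma continuous_RC_cauchy_integrand (G : C -> C) (c : C) (r y : R) : Cmod c < r ->
  (forall w, Cmod w <= r -> C_ex_derive G w) ->
  continuous_RC (fun y => G (RtoC r * cis y) * (RtoC r * cis y / (RtoC r * cis y - c)))%C y.
Proof.
  intros Hc HG. pose proof (Cmod_ge_0 c).
  apply (continuous_RC_centred_circle (fun w => G w * (w / (w - c)))%C), C_ex_derive_mult.
  - apply HG. rewrite Cmod_RtoC_mult, Cmod_cis, Rabs_right; lra.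
  - apply (C_ex_derive_div_sub (fun w => w)); [apply C_ex_derive_id | apply circle_point_neq, Hc].
Qed.

Section CauchyFormula.
Variables (F : C -> C) (c : C) (r : R).
Hypotheses (Hc : Cmod c < r) (HF : forall w, Cmod w <= r -> C_ex_derive F w).

Let cauchy_integral : C :=
  CInt (fun y => F (RtoC r * cis y) * (RtoC r * cis y / (RtoC r * cis y - c)))%C 0 (2 * PI).

Lemma cauchy_integral_shrink (t : R) : 0 < t -> Cmod c + t <= r ->
  cauchy_integral = CInt (fun y => F (c + RtoC t * cis y)) 0 (2 * PI).
Proof.
  intros Ht Htr. assert (HPI : 0 < PI) by apply PI_RGT_0.
  pose proof (Cmod_ge_0 c).
  set (g := fun w => (F w / (w - c))%C).
  assert (Hg : forall w, Cmod w <= r -> w <> c -> C_ex_derive g w)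
    by (intros w Hw Hwc; apply C_ex_derive_div_sub; auto).
  assert (Hin : forall y, Cmod (c + RtoC t * cis y) <= r).
  { intros y. eapply Rle_trans; [apply Cmod_triangle|].
    rewrite Cmod_RtoC_mult, Cmod_cis, Rabs_right; lra. }
  assert (Houter : circle_integral g 0 r = (Ci * cauchy_integral)%C).
  { unfold cauchy_integral. rewrite <- CInt_scal; [| lra |].
    - apply CInt_ext. intros y. unfold g. rewrite Cplus_0_l. field.
      intros E. apply (circle_point_neq c r y Hc), Ceq_minus, E.
    - intros y _. apply continuous_RC_cauchy_integrand; assumption. }
  assert (Hinner : circle_integral g c t = (Ci * CInt (fun y => F (c + RtoC t * cis y)) 0 (2 * PI))%C).
  { rewrite <- CInt_scal; [| lra | intros y _; apply continuous_RC_circle, HF, Hin].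
    apply CInt_ext. intros y. unfold g.
    replace (c + RtoC t * cis y - c)%C with (RtoC t * cis y)%C by ring.
    field. split; [apply cis_neq_0 | intros E; apply RtoC_inj in E; lra]. }
  pose proof (circle_integral_eq g c r t Ht Htr Hg) as E.
  rewrite Houter, Hinner in E.
  apply (f_equal (Cmult (- Ci))) in E. rewrite !Cmult_assoc in E.
  replace (- Ci * Ci)%C with (RtoC 1) in E by (apply injective_projections; simpl; ring).
  rewrite !Cmult_1_l in E. exact E.
Qed.

Theorem cauchy_integral_formula : cauchy_integral = (RtoC (2 * PI) * F c)%C.
Proof.
  assert (HPI : 0 < PI) by apply PI_RGT_0.
  apply Ceq_minus, Cmod_eq_0, Rle_antisym; [apply Rnot_lt_le; intros Hpos | apply Cmod_ge_0].
  set (eps := Cmod (cauchy_integral - RtoC (2 * PI) * F c) / (4 * PI)).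
  assert (Heps : 0 < eps) by (apply Rdiv_lt_0_compat; lra).
  destruct (C_ex_derive_continuous F c (HF c ltac:(lra)) eps Heps) as [d [Hd Hcont]].
  set (t := Rmin (d / 2) (r - Cmod c)).
  assert (Ht : 0 < t) by (apply Rmin_pos; lra).
  assert (Htr : Cmod c + t <= r) by (pose proof (Rmin_r (d / 2) (r - Cmod c)); unfold t; lra).
  assert (Htd : t < d) by (pose proof (Rmin_l (d / 2) (r - Cmod c)); unfold t; lra).
  assert (Hcirc : forall y, 0 <= y <= 2 * PI -> continuous_RC (fun y => F (c + RtoC t * cis y)) y).
  { intros y _. apply continuous_RC_circle, HF. eapply Rle_trans; [apply Cmod_triangle|].
    rewrite Cmod_RtoC_mult, Cmod_cis, Rabs_right; lra. }
  assert (Hbound : Cmod (CInt (fun y => F (c + RtoC t * cis y) - F c)%C 0 (2 * PI))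
                   <= (2 * PI - 0) * eps).
  { apply Cmod_CInt_le;
      [lra | intros y Hy; apply continuous_RC_plus; auto; apply continuous_RC_const |].
    intros y _. apply Hcont.
    replace (c + RtoC t * cis y - c)%C with (RtoC t * cis y)%C by ring.
    rewrite Cmod_RtoC_mult, Cmod_cis, Rabs_right; lra. }
  rewrite CInt_minus, CInt_const, <- (cauchy_integral_shrink t Ht Htr) in Hbound;
    [| lra | exact Hcirc | intros; apply continuous_RC_const].
  replace (RtoC (2 * PI - 0)) with (RtoC (2 * PI)) in Hbound by (f_equal; ring).
  unfold eps in Hbound.
  replace ((2 * PI - 0) * (Cmod (cauchy_integral - RtoC (2 * PI) * F c) / (4 * PI)))
    with (Cmod (cauchy_integral - RtoC (2 * PI) * F c) / 2) in Hbound by (field; lra).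
  lra.
Qed.
End CauchyFormula.

(** * The kernel *)

Definition kernel (z zeta : C) (r y : R) : R := 1 + 2 * Re (zeta * z / (RtoC r * cis y - z))%C.

Lemma Cconj_RtoC (x : R) : Cconj (RtoC x) = RtoC x.
Proof. unfold Cconj; apply injective_projections; simpl; ring. Qed.

Lemma RtoC_one_plus_twice_Re (q : C) : RtoC (1 + 2 * Re q) = (1 + q + Cconj q)%C.
Proof. unfold Cconj, Re; apply injective_projections; simpl; ring. Qed.

Section Kernel.
Variables (z zeta : C) (r : R).
Hypotheses (Hr : 0 < r) (Hz : Cmod z < r).

Lemma circle_sub_neq_0 (y : R) : (RtoC r * cis y - z)%C <> 0%C.
Proof. apply Cminus_eq_contra, circle_point_neq, Hz. Qed.

Lemma reflected_denominator_neq_0 (w : C) : Cmod w <= r ->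
  (RtoC (r * r) - Cconj z * w)%C <> 0%C.
Proof.
  intros Hw E. apply Ceq_minus in E. apply (f_equal Cmod) in E.
  rewrite Cmod_mult, Cmod_conj, Cmod_R, Rabs_right in E by nra.
  pose proof (Cmod_ge_0 z). pose proof (Cmod_ge_0 w). nra.
Qed.

(* On the circle [|w| = r] we have [conj w = r^2 / w]: the conjugate of the
   Cauchy kernel is again holomorphic inside the disc. *)
Lemma Cconj_kernel_term (y : R) :
  Cconj (zeta * z / (RtoC r * cis y - z))%C
  = (Cconj zeta * Cconj z * (RtoC r * cis y) / (RtoC (r * r) - Cconj z * (RtoC r * cis y)))%C.
Proof.
  assert (Hden : (RtoC (r * r) - Cconj z * (RtoC r * cis y))%C <> 0%C).
  { apply reflected_denominator_neq_0. rewrite Cmod_RtoC_mult, Cmod_cis, Rabs_right; lra. }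
  assert (Hr0 : RtoC r <> 0%C) by (intros E; apply RtoC_inj in E; lra).
  assert (Hden' : (RtoC r - Cconj z * cis y)%C <> 0%C).
  { intros E. apply Hden. rewrite RtoC_mult.
    replace (RtoC r * RtoC r - Cconj z * (RtoC r * cis y))%C
      with (RtoC r * (RtoC r - Cconj z * cis y))%C by ring.
    rewrite E. ring. }
  pose proof (cis_neq_0 y). pose proof (circle_sub_neq_0 y).
  rewrite Cdiv_conj by auto.
  rewrite !Cmult_conj, Cminus_conj, Cmult_conj, (Cconj_RtoC r), Cconj_cis, RtoC_mult.
  rewrite RtoC_mult in Hden. field. repeat split; assumption.
Qed.

Lemma continuous_RC_kernel (y : R) : continuous_RC (fun y => RtoC (kernel z zeta r y)) y.
Proof.
  assert (Hq : continuous_RC (fun y => zeta * z / (RtoC r * cis y - z))%C y).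
  { apply (continuous_RC_centred_circle (fun w => zeta * z / (w - z))%C).
    apply C_ex_derive_div_sub; [apply C_ex_derive_const | apply circle_point_neq, Hz]. }
  apply (continuous_RC_ext (fun y => 1 + (zeta * z / (RtoC r * cis y - z))
                                       + Cconj (zeta * z / (RtoC r * cis y - z)))%C).
  { intros s. unfold kernel. rewrite RtoC_one_plus_twice_Re. reflexivity. }
  apply continuous_RC_plus; [apply continuous_RC_plus; [apply continuous_RC_const | exact Hq]|].
  apply continuous_RC_Cconj, Hq.
Qed.

Lemma kernel_nonneg (y : R) : Cmod zeta * Cmod z <= (r - Cmod z) / 2 -> 0 <= kernel z zeta r y.
Proof.
  intros Hzeta. unfold kernel.
  set (q := (zeta * z / (RtoC r * cis y - z))%C).
  assert (Hd : r - Cmod z <= Cmod (RtoC r * cis y - z)).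
  { pose proof (Cmod_sub_ge (RtoC r * cis y) z).
    rewrite Cmod_RtoC_mult, Cmod_cis, Rabs_right in H by lra. lra. }
  assert (Hq : Cmod q <= 1 / 2).
  { unfold q. rewrite Cmod_div, Cmod_mult by apply circle_sub_neq_0.
    apply (Rmult_le_reg_r (Cmod (RtoC r * cis y - z))); [lra|].
    unfold Rdiv. rewrite Rmult_assoc, Rinv_l by lra. lra. }
  pose proof (re_le_Cmod q). apply Rabs_le_between in H. lra.
Qed.

Lemma kernel_integral_formula (F : C -> C) : (forall w, Cmod w <= r -> C_ex_derive F w) ->
  CInt (fun y => F (RtoC r * cis y) * RtoC (kernel z zeta r y))%C 0 (2 * PI)
  = (RtoC (2 * PI) * (F 0 + zeta * (F z - F 0)))%C.
Proof.
  intros HF. assert (HPI : 0 < PI) by apply PI_RGT_0.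
  set (k := (Cconj zeta * Cconj z)%C).
  set (A := fun w => ((1 - zeta) * F w + F w * (k * w / (RtoC (r * r) - Cconj z * w)))%C).
  set (B := fun w => (zeta * F w)%C).
  assert (HA : forall w, Cmod w <= r -> C_ex_derive A w).
  { intros w Hw. apply C_ex_derive_plus;
      [apply C_ex_derive_mult; [apply C_ex_derive_const | auto] | apply C_ex_derive_mult; [auto|]].
    apply C_ex_derive_mult; [apply C_ex_derive_mult; [apply C_ex_derive_const | apply C_ex_derive_id]|].
    apply C_ex_derive_inv; [| apply reflected_denominator_neq_0, Hw].
    apply C_ex_derive_minus; [apply C_ex_derive_const|].
    apply C_ex_derive_mult; [apply C_ex_derive_const | apply C_ex_derive_id]. }
  assert (HB : forall w, Cmod w <= r -> C_ex_derive B w)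
    by (intros w Hw; apply C_ex_derive_mult; [apply C_ex_derive_const | auto]).
  pose proof (cauchy_integral_formula A 0 r ltac:(rewrite Cmod_0; lra) HA) as CA.
  pose proof (cauchy_integral_formula B z r Hz HB) as CB.
  rewrite (CInt_ext _ (fun y => A (RtoC r * cis y) * (RtoC r * cis y / (RtoC r * cis y - 0))
                              + B (RtoC r * cis y) * (RtoC r * cis y / (RtoC r * cis y - z)))%C).
  - rewrite CInt_plus, CA, CB
      by (try lra; intros; apply continuous_RC_cauchy_integrand; auto; rewrite Cmod_0; lra).
    unfold A, B, Cdiv. rewrite !Cmult_0_r, Cmult_0_l. ring.
  - intros y. unfold kernel. rewrite RtoC_one_plus_twice_Re, Cconj_kernel_term. unfold A, B, k.
    assert (Hw0 : (RtoC r * cis y)%C <> 0%C) by (apply circle_point_neq; rewrite Cmod_0; lra).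
    pose proof (circle_sub_neq_0 y).
    pose proof (reflected_denominator_neq_0 (RtoC r * cis y)
      ltac:(rewrite Cmod_RtoC_mult, Cmod_cis, Rabs_right; lra)).
    replace (RtoC r * cis y - 0)%C with (RtoC r * cis y)%C by ring.
    set (w := (RtoC r * cis y)%C) in *. set (Fw := F w).
    field. auto.
Qed.
Lemma CInt_kernel : CInt (fun y => RtoC (kernel z zeta r y)) 0 (2 * PI) = RtoC (2 * PI).
Proof.
  rewrite (CInt_ext _ (fun y => (fun _ => RtoC 1) (RtoC r * cis y) * RtoC (kernel z zeta r y))%C)
    by (intros; simpl; ring).
  rewrite (kernel_integral_formula (fun _ => RtoC 1) (fun w _ => C_ex_derive_const (RtoC 1) w)).
  ring.
Qed.
End Kernel.

(** * Norms of vector-valued integrals *)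

Lemma Fin_uniform_radius (n : nat) (Q : Fin.t n -> R -> Prop) :
  (forall i d d', 0 < d' <= d -> Q i d -> Q i d') -> (forall i, exists d, 0 < d /\ Q i d) ->
  exists d, 0 < d /\ forall i, Q i d.
Proof.
  induction n as [| n IH]; intros Hmono Hex.
  - exists 1. split; [lra | intros i; apply Fin.case0, i].
  - destruct (IH (fun j => Q (Fin.FS j))) as [d1 [Hd1 H1]];
      [intros j; apply Hmono | intros j; apply Hex |].
    destruct (Hex Fin.F1) as [d2 [Hd2 H2]].
    exists (Rmin d1 d2). split; [apply Rmin_pos; auto|].
    intros i. apply (Fin.caseS' i).
    + apply (Hmono _ d2); [split; [apply Rmin_pos; auto | apply Rmin_r] | exact H2].
    + intros j. apply (Hmono _ d1); [split; [apply Rmin_pos; auto | apply Rmin_l] | apply H1].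
Qed.

Definition Cn_cons {n} (c : C) (x : Cn n) : Cn (S n) := fun i => Fin.caseS' i (fun _ => C) c x.

Lemma norm_le_sup_coord (n : nat) (N : Cn n -> R) : is_norm N ->
  exists K, 0 <= K /\ forall x m, (forall i, Cmod (x i) <= m) -> N x <= K * m.
Proof.
  revert N. induction n as [| n IH]; intros N [Hpos [Hdef [Hs Ht]]].
  - exists 0. split; [lra|]. intros x m _.
    replace x with (vscal 0 x) by (apply functional_extensionality; intros i; apply Fin.case0, i).
    rewrite Hs, Cmod_0. lra.
  - destruct (IH (fun x : Cn n => N (Cn_cons 0 x))) as [K [HK HKx]].
    { assert (Hscal : forall c (x : Cn n), Cn_cons 0 (vscal c x) = vscal c (Cn_cons 0 x)).
      { intros c x. apply functional_extensionality. intros i. apply (Fin.caseS' i); [| reflexivity].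
        unfold vscal; simpl. ring. }
      assert (Hadd : forall x y : Cn n, Cn_cons 0 (vadd x y) = vadd (Cn_cons 0 x) (Cn_cons 0 y)).
      { intros x y. apply functional_extensionality. intros i. apply (Fin.caseS' i); [| reflexivity].
        unfold vadd; simpl. ring. }
      split; [| split; [| split]]; intros.
      - apply Hpos.
      - exact (Hdef _ H (Fin.FS i)).
      - rewrite Hscal. apply Hs.
      - rewrite Hadd. apply Ht. }
    set (e0 := Cn_cons (RtoC 1) (fun _ => RtoC 0) : Cn (S n)).
    exists (N e0 + K). split; [pose proof (Hpos e0); lra|]. intros x m Hx.
    assert (Hm : 0 <= m) by (specialize (Hx Fin.F1); pose proof (Cmod_ge_0 (x Fin.F1)); lra).
    replace x with (vadd (vscal (x Fin.F1) e0) (Cn_cons 0 (fun j => x (Fin.FS j)))).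
    + eapply Rle_trans; [apply Ht|]. rewrite Hs.
      specialize (HKx (fun j => x (Fin.FS j)) m (fun j => Hx (Fin.FS j))).
      pose proof (Hpos e0). pose proof (Hx Fin.F1). pose proof (Cmod_ge_0 (x Fin.F1)). nra.
    + apply functional_extensionality. intros i. apply (Fin.caseS' i); unfold vadd, vscal, e0; simpl.
      * ring.
      * intros j. ring.
Qed.

Section NormOfIntegral.
Variables (n : nat) (N : Cn n -> R) (g : Fin.t n -> R -> C) (p : R -> C) (a0 b0 : R).
Hypotheses (HN : is_norm N) (Hab0 : a0 < b0)
  (Hg : forall i t, a0 <= t <= b0 -> continuous_RC (g i) t)
  (Hp : forall t, a0 <= t <= b0 -> continuous_RC p t)
  (Hgp : forall t, a0 <= t <= b0 -> N (fun i => g i t) <= Re (p t)).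

Lemma norm_CInt_le_local (eps x : R) : 0 < eps -> a0 <= x <= b0 -> exists del, 0 < del /\
  forall a b, a0 <= a -> b <= b0 -> a <= x <= b -> b - a < del ->
    N (fun i => CInt (g i) a b) <= Re (CInt p a b) + eps * (b - a).
Proof.
  intros Heps Hx. pose proof HN as [_ [_ [Hs Ht]]].
  destruct (norm_le_sup_coord n N HN) as [K [HK HKx]].
  set (eta := eps / (K + 1)).
  assert (Heta : 0 < eta) by (apply Rdiv_lt_0_compat; lra).
  destruct (Fin_uniform_radius n (fun i d => forall s, Rabs (s - x) < d -> Cmod (g i s - g i x) < eta))
    as [d1 [Hd1 D1]].
  { intros i d d' Hd Q s Hs'. apply Q. lra. }
  { intros i. apply (Hg i x Hx eta Heta). }
  destruct (Hp x Hx eta Heta) as [d2 [Hd2 D2]].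
  exists (Rmin d1 d2). split; [apply Rmin_pos; auto|].
  intros a b Ha Hb Hxab Hba.
  assert (Hclose : forall s, a <= s <= b -> Rabs (s - x) < d1 /\ Rabs (s - x) < d2).
  { intros s Hs'. assert (Rabs (s - x) <= b - a) by (apply Rabs_le; lra).
    pose proof (Rmin_l d1 d2); pose proof (Rmin_r d1 d2). lra. }
  assert (Hcg : forall i t, a <= t <= b -> continuous_RC (fun s => g i s - g i x)%C t)
    by (intros; apply continuous_RC_plus; [apply Hg; lra | apply continuous_RC_const]).
  assert (Hcp : forall t, a <= t <= b -> continuous_RC (fun s => p s - p x)%C t)
    by (intros; apply continuous_RC_plus; [apply Hp; lra | apply continuous_RC_const]).
  set (E := fun i => CInt (fun s => g i s - g i x)%C a b).
  assert (Hdecomp : (fun i => CInt (g i) a b) = vadd (vscal (RtoC (b - a)) (fun i => g i x)) E).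
  { apply functional_extensionality; intros i. unfold vadd, vscal, E.
    rewrite CInt_minus, CInt_const;
      [ring | lra | intros; apply Hg; lra | intros; apply continuous_RC_const]. }
  assert (HE : N E <= K * ((b - a) * eta)).
  { apply HKx. intros i. apply Cmod_CInt_le; [lra | apply Hcg |].
    intros t Ht'. left. apply D1, Hclose, Ht'. }
  assert (HP : (b - a) * (Re (p x) - eta) <= Re (CInt p a b)).
  { assert (Hdev : Cmod (CInt (fun s => p s - p x)%C a b) <= (b - a) * eta).
    { apply Cmod_CInt_le; [lra | apply Hcp |]. intros t Ht'. left. apply D2, Hclose, Ht'. }
    rewrite CInt_minus, CInt_const in Hdev;
      [| lra | intros; apply Hp; lra | intros; apply continuous_RC_const].
    pose proof (re_le_Cmod (CInt p a b - RtoC (b - a) * p x)%C) as Hre.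
    replace (Re (CInt p a b - RtoC (b - a) * p x)%C) with (Re (CInt p a b) - (b - a) * Re (p x))
      in Hre by (unfold Re; simpl; ring).
    apply Rabs_le_between in Hre. nra. }
  rewrite Hdecomp. eapply Rle_trans; [apply Ht|]. rewrite Hs, Cmod_R, Rabs_right by lra.
  specialize (Hgp x Hx).
  assert (K * ((b - a) * eta) + (b - a) * eta <= eps * (b - a))
    by (unfold eta; right; field; lra).
  nra.
Qed.

Lemma norm_CInt_le : N (fun i => CInt (g i) a0 b0) <= Re (CInt p a0 b0).
Proof.
  apply Rle_plus_epsilon. intros eps Heps.
  set (eps' := eps / (b0 - a0)).
  assert (Heps' : 0 < eps') by (apply Rdiv_lt_0_compat; lra).
  replace eps with (eps' * (b0 - a0)) by (unfold eps'; field; lra).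
  apply (interval_bisection
           (fun a b => N (fun i => CInt (g i) a b) <= Re (CInt p a b) + eps' * (b - a)));
    [exact Hab0 | | intros x Hx; apply norm_CInt_le_local; auto].
  intros a b Ha Hab Hb H1 H2. pose proof HN as [_ [_ [_ Ht]]].
  replace (fun i => CInt (g i) a b)
    with (vadd (fun i => CInt (g i) a ((a + b) / 2)) (fun i => CInt (g i) ((a + b) / 2) b)).
  - rewrite (CInt_Chasles p a ((a + b) / 2) b) by (try lra; intros; apply Hp; lra).
    eapply Rle_trans; [apply Ht|].
    change (Re (CInt p a ((a + b) / 2) + CInt p ((a + b) / 2) b)%C)
      with (Re (CInt p a ((a + b) / 2)) + Re (CInt p ((a + b) / 2) b)). lra.
  - apply functional_extensionality; intros i. unfold vadd. symmetry.
    apply CInt_Chasles; [lra | intros; apply Hg; lra].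
Qed.
End NormOfIntegral.

Lemma Rle_of_le_add_mul_small (x y T K : R) : 0 < T ->
  (forall t, 0 < t <= T -> x <= y + t * K) -> x <= y.
Proof.
  intros HT H. apply Rle_plus_epsilon. intros eps Heps.
  pose proof (Rabs_pos K) as HK.
  set (t := Rmin T (eps / (Rabs K + 1))).
  assert (Ht : 0 < t) by (apply Rmin_pos; [lra | apply Rdiv_lt_0_compat; lra]).
  assert (HtK : t * (Rabs K + 1) <= eps).
  { apply Rle_trans with (eps / (Rabs K + 1) * (Rabs K + 1)); [| right; field; lra].
    apply Rmult_le_compat_r; [lra | apply Rmin_r]. }
  specialize (H t (conj Ht (Rmin_l _ _))). pose proof (Rle_abs K). nra.
Qed.

Section Lemma13p2.
Variables (n : nat) (N : Cn n -> R) (f : C -> Cn n) (z : C).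
Hypothesis HN : is_norm N.

Lemma norm_affine_combination_le_1 (zeta : C) (r : R) :
  (forall i w, Cmod w <= r -> C_ex_derive (fun w => f w i) w) ->
  (forall w, Cmod w <= r -> N (f w) <= 1) ->
  0 < r -> Cmod z < r -> Cmod zeta * Cmod z <= (r - Cmod z) / 2 ->
  N (vadd (f 0%C) (vscal zeta (vsub (f z) (f 0%C)))) <= 1.
Proof.
  intros Hf Hf1 Hr Hz Hzeta. pose proof HN as [_ [_ [Hs _]]].
  assert (HPI : 0 < PI) by apply PI_RGT_0.
  assert (H2PI : RtoC (2 * PI) <> 0%C) by (intros E; apply RtoC_inj in E; lra).
  assert (Hcirc : forall y, Cmod (RtoC r * cis y) <= r)
    by (intros; rewrite Cmod_RtoC_mult, Cmod_cis, Rabs_right; lra).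
  set (c := RtoC (/ (2 * PI))).
  set (g := fun i y => (c * (f (RtoC r * cis y) i * RtoC (kernel z zeta r y)))%C).
  set (p := fun y => (c * RtoC (kernel z zeta r y))%C).
  assert (Hcg : forall i y,
            continuous_RC (fun y => f (RtoC r * cis y) i * RtoC (kernel z zeta r y))%C y).
  { intros i y. apply continuous_RC_mult; [| apply continuous_RC_kernel; auto].
    apply (continuous_RC_centred_circle (fun w => f w i)). auto. }
  assert (Hint_g : (fun i => CInt (g i) 0 (2 * PI)) = vadd (f 0%C) (vscal zeta (vsub (f z) (f 0%C)))).
  { apply functional_extensionality; intros i. unfold g.
    rewrite CInt_scal, (kernel_integral_formula z zeta r Hr Hz (fun w => f w i) (Hf i))
      by (try lra; intros; apply Hcg).
    unfold c, vadd, vscal, vsub. rewrite RtoC_inv by lra. field. exact H2PI. }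
  assert (Hint_p : CInt p 0 (2 * PI) = RtoC 1).
  { unfold p. rewrite CInt_scal, CInt_kernel by (try lra; intros; apply continuous_RC_kernel; auto).
    unfold c. rewrite RtoC_inv by lra. field. exact H2PI. }
  rewrite <- Hint_g. replace 1 with (Re (CInt p 0 (2 * PI))) by (rewrite Hint_p; reflexivity).
  apply norm_CInt_le; auto; [lra | intros; apply continuous_RC_mult; auto; apply continuous_RC_const
                         | intros; apply continuous_RC_mult; [apply continuous_RC_const|];
                           apply continuous_RC_kernel; auto |].
  intros y _. pose proof (kernel_nonneg z zeta r Hr Hz y Hzeta) as HP.
  assert (Hw : 0 <= / (2 * PI) * kernel z zeta r y)
    by (apply Rmult_le_pos; [left; apply Rinv_0_lt_compat; lra | exact HP]).
  replace (fun i => g i y) with (vscal (RtoC (/ (2 * PI) * kernel z zeta r y)) (f (RtoC r * cis y)%C))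
    by (apply functional_extensionality; intros i; unfold vscal, g, c; rewrite RtoC_mult; ring).
  rewrite Hs, Cmod_R, Rabs_right by lra.
  replace (Re (p y)) with (/ (2 * PI) * kernel z zeta r y) by (unfold p, c, Re; simpl; ring).
  pose proof (Hf1 _ (Hcirc y)). nra.
Qed.

Lemma norm_affine_combination_le_shrunk (zeta : C) (t : R) :
  (forall i w, in_disc w -> C_ex_derive (fun w => f w i) w) ->
  (forall w, in_disc w -> N (f w) <= 1) ->
  in_disc z -> Cmod zeta * Cmod z <= (1 - Cmod z) / 2 -> 0 < t <= (1 - Cmod z) / 2 ->
  N (vadd (f 0%C) (vscal zeta (vsub (f z) (f 0%C))))
  <= 1 + t * (Cmod zeta * N (vsub (f z) (f 0%C)) / (1 - Cmod z)).
Proof.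
  unfold in_disc. intros Hf Hf1 Hz Hzeta Ht. pose proof HN as [Hpos [_ [Hs Ht']]].
  pose proof (Cmod_ge_0 z). pose proof (Cmod_ge_0 zeta).
  set (u := vsub (f z) (f 0%C)).
  set (lam := 1 - t / (1 - Cmod z)).
  assert (Hlam : 0 < lam <= 1).
  { unfold lam. split; [| assert (0 < t / (1 - Cmod z)) by (apply Rdiv_lt_0_compat; lra); lra].
    assert (t / (1 - Cmod z) <= 1 / 2) by (apply (Rmult_le_reg_r (1 - Cmod z)); [lra|];
      unfold Rdiv; rewrite Rmult_assoc, Rinv_l by lra; lra).
    lra. }
  (* scaling [zeta] by [lam] is exactly what the condition at radius [1 - t] allows *)
  assert (Hsmall : N (vadd (f 0%C) (vscal (RtoC lam * zeta) u)) <= 1).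
  { apply (norm_affine_combination_le_1 (RtoC lam * zeta) (1 - t)); try lra.
    - intros i w Hw. apply Hf. unfold in_disc. lra.
    - intros w Hw. apply Hf1. unfold in_disc. lra.
    - rewrite Cmod_mult, Cmod_R, Rabs_right by lra.
      replace (1 - t - Cmod z) with (lam * (1 - Cmod z)) by (unfold lam; field; lra).
      apply Rle_trans with (lam * (Cmod zeta * Cmod z)); [right; ring|].
      replace (lam * (1 - Cmod z) / 2) with (lam * ((1 - Cmod z) / 2)) by (field; lra).
      apply Rmult_le_compat_l; lra. }
  replace (vadd (f 0%C) (vscal zeta u))
    with (vadd (vadd (f 0%C) (vscal (RtoC lam * zeta) u)) (vscal (RtoC (1 - lam) * zeta) u))
    by (apply functional_extensionality; intros i; unfold vadd, vscal; rewrite RtoC_minus; ring).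
  eapply Rle_trans; [apply Ht'|]. rewrite Hs, Cmod_mult, Cmod_R, Rabs_right by lra.
  replace ((1 - lam) * Cmod zeta * N u) with (t * (Cmod zeta * N u / (1 - Cmod z)))
    by (unfold lam; field; lra).
  lra.
Qed.
End Lemma13p2.

Theorem lemma13p2 (n : nat) (N : Cn n -> R) (f : C -> Cn n) :
  is_norm N ->
  holomorphic_on_disc f ->
  (forall w, in_disc w -> N (f w) <= 1) ->
  forall z zeta : C,
    in_disc z -> z <> 0%C ->
    Cmod zeta <= (1 - Cmod z) / (2 * Cmod z) ->
    N (vadd (f 0%C) (vscal zeta (vsub (f z) (f 0%C)))) <= 1.
Proof.
  intros HN Hhol Hf1 z zeta Hz Hz0 Hzeta. pose proof Hz as Hz1. unfold in_disc in Hz1.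
  pose proof (proj1 (Cmod_gt_0 z) Hz0) as Hzpos.
  assert (Hzeta' : Cmod zeta * Cmod z <= (1 - Cmod z) / 2).
  { apply (Rmult_le_compat_r (Cmod z)) in Hzeta; [| lra].
    replace ((1 - Cmod z) / (2 * Cmod z) * Cmod z) with ((1 - Cmod z) / 2) in Hzeta by (field; lra).
    exact Hzeta. }
  apply (Rle_of_le_add_mul_small _ 1 ((1 - Cmod z) / 2)
           (Cmod zeta * N (vsub (f z) (f 0%C)) / (1 - Cmod z))); [lra|].
  intros t Ht. apply norm_affine_combination_le_shrunk; assumption.
Qed.
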